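(* Let $L$ be a $c$-lattice and $S$ a multiplicatively closed subset of $L$ (with $1\in S$, $0\notin S$). If $p\in L$ is an $S$-prime element, then its $S$-saturation $p_S$ is a prime element of $L$.
   Context: A multiplicative lattice is a complete lattice with a commutative, associative multiplication distributing over arbitrary joins, with $1$ as identity; $L_*$ is the set of compact elements. A $c$-lattice is a compactly generated multiplicative lattice with $1$ compact in which the product of two compact elements is compact. A multiplicatively closed subset is a nonempty $S\subseteq L_*$ closed under multiplication. The $S$-saturation of $a$ is $a_S=\bigvee\{x\in L\mid sx\le a\text{ for some }s\in S\}$. An element $p\ne1$ is prime if $ab\le p$ implies $a\le p$ or $b\le p$. A proper element $p$ with $t\not\le p$ for all $t\in S$ is $S$-prime if there exists $s\in S$ such that for all $a,b\in L$, $ab\le p$ implies $sa\le p$ or $sb\le p$. *)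

From Stdlib Require Import List.
Import ListNotations.

Record MultLattice := {
  car :> Type;
  le : car -> car -> Prop;
  sup : (car -> Prop) -> car;
  mul : car -> car -> car;
  le_refl : forall a, le a a;
  le_antisym : forall a b, le a b -> le b a -> a = b;
  le_trans : forall a b c, le a b -> le b c -> le a c;
  sup_ub : forall (A : car -> Prop) a, A a -> le a (sup A);
  sup_least : forall (A : car -> Prop) b, (forall a, A a -> le a b) -> le (sup A) b;
  mulC : forall a b, mul a b = mul b a;
  mulA : forall a b c, mul a (mul b c) = mul (mul a b) c;
  mul_sup : forall a (A : car -> Prop),
      mul a (sup A) = sup (fun y => exists x, A x /\ y = mul a x);
  mul1 : forall a, mul (sup (fun _ => True)) a = a
}.

Arguments le {L} : rename.
Arguments sup {L} : rename.
Arguments mul {L} : rename.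

Definition top (L : MultLattice) : L := sup (fun _ : L => True).
Definition bot (L : MultLattice) : L := sup (fun _ : L => False).

Definition compact {L : MultLattice} (x : L) : Prop :=
  forall A : L -> Prop, le x (sup A) ->
    exists l : list L, (forall y, In y l -> A y) /\ le x (sup (fun y => In y l)).

Definition compactly_generated (L : MultLattice) : Prop :=
  forall a : L, a = sup (fun x => compact x /\ le x a).

Definition c_lattice (L : MultLattice) : Prop :=
  compactly_generated L /\ compact (top L) /\
  (forall x y : L, compact x -> compact y -> compact (mul x y)).

Definition mult_closed {L : MultLattice} (S : L -> Prop) : Prop :=
  (exists s, S s) /\ (forall s, S s -> compact s) /\
  (forall s t, S s -> S t -> S (mul s t)).

Definition saturation {L : MultLattice} (S : L -> Prop) (a : L) : L :=
  sup (fun x => exists s, S s /\ le (mul s x) a).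

Definition prime {L : MultLattice} (p : L) : Prop :=
  p <> top L /\ forall a b : L, le (mul a b) p -> le a p \/ le b p.

Definition S_prime {L : MultLattice} (S : L -> Prop) (p : L) : Prop :=
  p <> top L /\ (forall t, S t -> ~ le t p) /\
  exists s, S s /\ forall a b : L, le (mul a b) p -> le (mul s a) p \/ le (mul s b) p.

From Stdlib Require Import List Classical.

(* If a compact x lies below p_S, finitely many witnesses s_i x_i <= p cover it, and
   their product t in S satisfies t x <= p.  Hence if compact x, y have x y <= p_S, some
   u in S has s (u x) <= p or s y <= p, where s is the S-prime witness: x or y lies below
   p_S.  Compact generation extends this to arbitrary elements, and compactness of 1
   together with p having no element of S below it keeps p_S proper. *)

Section MultLatticeFacts.
Variable L : MultLattice.

Lemma mul_top_l (a : L) : mul (top L) a = a.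
Proof. exact (mul1 L a). Qed.

Lemma mul_le_mono_l (a b c : L) : le a b -> le (mul c a) (mul c b).
Proof.
  intros Hab.
  assert (Hsup : sup (fun y => y = a \/ y = b) = b).
  { apply le_antisym.
    - apply sup_least. intros y [-> | ->]; [exact Hab | apply le_refl].
    - apply sup_ub. now right. }
  rewrite <- Hsup, mul_sup. apply sup_ub. exists a. split; [now left | reflexivity].
Qed.

Lemma mul_le_mono (a b c d : L) : le a b -> le c d -> le (mul a c) (mul b d).
Proof.
  intros Hab Hcd. apply le_trans with (mul a d); [now apply mul_le_mono_l |].
  rewrite (mulC _ a d), (mulC _ b d). now apply mul_le_mono_l.
Qed.

Lemma mul_le_r (t a : L) : le (mul t a) a.
Proof.
  rewrite <- (mul_top_l a) at 2. apply mul_le_mono. 2: apply le_refl.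
  exact (sup_ub _ (fun _ => True) t I).
Qed.

Lemma prime_of_compact_prime (q : L) : compactly_generated L ->
  (forall x y : L, compact x -> compact y -> le (mul x y) q -> le x q \/ le y q) ->
  forall a b : L, le (mul a b) q -> le a q \/ le b q.
Proof.
  intros Hcg Hq a b Hab.
  assert (Hcompact_below : forall c : L, ~ le c q ->
            exists x, compact x /\ le x c /\ ~ le x q).
  { intros c Hc. apply NNPP. intros Hnone. apply Hc. rewrite (Hcg c).
    apply sup_least. intros x [Hx Hxc]. apply NNPP. intros Hxq.
    apply Hnone. now exists x. }
  apply NNPP. intros Hnot. apply not_or_and in Hnot as [Ha Hb].
  destruct (Hcompact_below a Ha) as [x [Hx [Hxa Hxq]]].
  destruct (Hcompact_below b Hb) as [y [Hy [Hyb Hyq]]].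
  destruct (Hq x y Hx Hy) as [H | H]; [| now apply Hxq | now apply Hyq].
  apply le_trans with (mul a b); [now apply mul_le_mono | exact Hab].
Qed.

End MultLatticeFacts.

Section Saturation.
Variables (L : MultLattice) (S : L -> Prop) (p : L).
Hypothesis S_top : S (top L).
Hypothesis S_mul : forall s t, S s -> S t -> S (mul s t).

Lemma le_saturation (s x : L) : S s -> le (mul s x) p -> le x (saturation S p).
Proof. intros Hs Hsx. apply sup_ub. now exists s. Qed.

Lemma saturation_witness_list (l : list L) :
  (forall y, In y l -> exists s, S s /\ le (mul s y) p) ->
  exists t, S t /\ forall y, In y l -> le (mul t y) p.
Proof.
  induction l as [| y l IH]; intros Hl.
  - exists (top L). split; [exact S_top | intros y []].
  - destruct IH as [t [Ht Htl]]. { intros z Hz. apply Hl. now right. }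
    destruct (Hl y (or_introl eq_refl)) as [s [Hs Hsy]].
    exists (mul s t). split; [now apply S_mul |].
    intros z [<- | Hz].
    + rewrite (mulC _ s t), <- mulA.
      apply le_trans with (mul t p); [now apply mul_le_mono_l | apply mul_le_r].
    + rewrite <- mulA.
      apply le_trans with (mul s p); [now apply mul_le_mono_l, Htl | apply mul_le_r].
Qed.

Lemma compact_le_saturation (x : L) : compact x -> le x (saturation S p) ->
  exists t, S t /\ le (mul t x) p.
Proof.
  intros Hx Hxp. destruct (Hx _ Hxp) as [l [Hl Hxl]].
  destruct (saturation_witness_list l Hl) as [t [Ht Htl]].
  exists t. split; [exact Ht |].
  apply le_trans with (mul t (sup (fun y => In y l))); [now apply mul_le_mono_l |].
  rewrite mul_sup. apply sup_least. intros y [z [Hz ->]]. now apply Htl.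
Qed.

Lemma saturation_neq_top : compact (top L) -> (forall t, S t -> ~ le t p) ->
  saturation S p <> top L.
Proof.
  intros Htop HS Heq.
  destruct (compact_le_saturation (top L) Htop) as [t [Ht Htp]].
  { rewrite Heq. apply le_refl. }
  apply (HS t Ht). rewrite mulC, mul_top_l in Htp. exact Htp.
Qed.

Lemma saturation_compact_prime (s : L) : S s ->
  (forall a b : L, le (mul a b) p -> le (mul s a) p \/ le (mul s b) p) ->
  forall x y : L, compact (mul x y) -> le (mul x y) (saturation S p) ->
  le x (saturation S p) \/ le y (saturation S p).
Proof.
  intros Hs Hsp x y Hxy_compact Hxy.
  destruct (compact_le_saturation (mul x y) Hxy_compact Hxy) as [u [Hu Hup]].
  rewrite mulA in Hup.
  destruct (Hsp _ _ Hup) as [H | H].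
  - left. apply le_saturation with (mul s u); [now apply S_mul |].
    now rewrite <- mulA.
  - right. now apply le_saturation with s.
Qed.

End Saturation.

Theorem mainTheorem12 (L : MultLattice) (S : L -> Prop) (p : L) :
  c_lattice L -> mult_closed S -> S (top L) -> ~ S (bot L) ->
  S_prime S p -> prime (saturation S p).
Proof.
  intros [Hcg [Htop_compact Hmul_compact]] [_ [_ S_mul]] S_top _ [_ [HS [s [Hs Hsp]]]].
  split.
  - exact (saturation_neq_top L S p S_top S_mul Htop_compact HS).
  - apply prime_of_compact_prime; [exact Hcg |].
    intros x y Hx Hy.
    apply (saturation_compact_prime L S p S_top S_mul s Hs Hsp).
    now apply Hmul_compact.
Qed.
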